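(* In $\mathbb{R}^8$ with coordinates $(l_{ijk})_{i,j,k\in\{0,1\}}$, let $X=\{l: l_{000}+l_{011}-l_{001}-l_{010}\ge0,\ l_{100}+l_{111}-l_{101}-l_{110}\ge0,\ l_{000}+l_{101}-l_{001}-l_{100}\ge0,\ l_{010}+l_{111}-l_{011}-l_{110}\ge0,\ l_{000}+l_{110}-l_{010}-l_{100}\ge0,\ l_{001}+l_{111}-l_{011}-l_{101}\ge0\}$, $Y=\{l: l_{000}+l_{011}-l_{001}-l_{010}\ge0,\ l_{100}+l_{111}-l_{101}-l_{110}\ge0,\ l_{000}+l_{101}-l_{001}-l_{100}\le0,\ l_{010}+l_{111}-l_{011}-l_{110}\le0,\ l_{000}+l_{110}-l_{010}-l_{100}\le0,\ l_{001}+l_{111}-l_{011}-l_{101}\le0\}$, $W=\{l: l_{000}+l_{011}-l_{001}-l_{010}\ge0,\ l_{100}+l_{111}-l_{101}-l_{110}\ge0\}$. Then the Minkowski sum $X+Y=\{x+y:x\in X,y\in Y\}$ equals $W$. *)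

From Stdlib Require Import Reals.
Open Scope R_scope.

(* A point of R^8 with coordinates l_{ijk}, i,j,k in {0,1}; we encode 0 as false, 1 as true. *)
Definition pt := bool -> bool -> bool -> R.


Definition f1 (l : pt) : R := l false false false + l false true true - l false false true - l false true false.
Definition f2 (l : pt) : R := l true false false + l true true true - l true false true - l true true false.
Definition f3 (l : pt) : R := l false false false + l true false true - l false false true - l true false false.
Definition f4 (l : pt) : R := l false true false + l true true true - l false true true - l true true false.
Definition f5 (l : pt) : R := l false false false + l true true false - l false true false - l true false false.
Definition f6 (l : pt) : R := l false false true + l true true true - l false true true - l true false true.

Definition Xset (l : pt) : Prop :=
  f1 l >= 0 /\ f2 l >= 0 /\ f3 l >= 0 /\ f4 l >= 0 /\ f5 l >= 0 /\ f6 l >= 0.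

Definition Yset (l : pt) : Prop :=
  f1 l >= 0 /\ f2 l >= 0 /\ f3 l <= 0 /\ f4 l <= 0 /\ f5 l <= 0 /\ f6 l <= 0.

Definition Wset (l : pt) : Prop := f1 l >= 0 /\ f2 l >= 0.

Definition minkowski_sum (A B : pt -> Prop) (l : pt) : Prop :=
  exists x y : pt, A x /\ B y /\ forall i j k, l i j k = x i j k + y i j k.

(* The forms f1, f2 are nonnegative on both X and Y, hence on X + Y.  Conversely,
   Y contains the points [shift s t] (s, t <= 0), on which f1 and f2 vanish while
   f3 = f4 = s and f5 = f6 = t.  Given l in W, choose s and t below 0 and below
   f3 l, ..., f6 l; then l - shift s t keeps f1, f2 and makes f3, ..., f6
   nonnegative, so it lies in X. *)
From Stdlib Require Import Reals Lra.
Open Scope R_scope.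

Lemma minkowski_sum_Wset (l : pt) : minkowski_sum Xset Yset l -> Wset l.
Proof.
  intros [x [y [[hx1 [hx2 _]] [[hy1 [hy2 _]] E]]]].
  unfold Wset, f1, f2 in *; rewrite !E; lra.
Qed.

Definition shift (s t : R) : pt :=
  fun i j k => (if andb i k then s else 0) + (if andb i j then t else 0).

Lemma shift_in_Yset (s t : R) : s <= 0 -> t <= 0 -> Yset (shift s t).
Proof. intros; unfold Yset, f1, f2, f3, f4, f5, f6, shift; simpl; lra. Qed.

Lemma sub_shift_in_Xset (l : pt) (s t : R) :
  Wset l -> s <= f3 l -> s <= f4 l -> t <= f5 l -> t <= f6 l ->
  Xset (fun i j k => l i j k - shift s t i j k).
Proof.
  unfold Wset, Xset, f1, f2, f3, f4, f5, f6, shift; simpl; lra.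
Qed.

Lemma nonpos_lower_bound (a b : R) : exists s, s <= 0 /\ s <= a /\ s <= b.
Proof.
  exists (- (Rabs a + Rabs b)).
  pose proof (Rle_abs (- a)); pose proof (Rle_abs (- b)).
  pose proof (Rabs_pos a); pose proof (Rabs_pos b).
  rewrite !Rabs_Ropp in *; lra.
Qed.

Theorem mainTheorem2 : forall l : pt, minkowski_sum Xset Yset l <-> Wset l.
Proof.
  intro l; split; [apply minkowski_sum_Wset |].
  intro hW.
  destruct (nonpos_lower_bound (f3 l) (f4 l)) as [s [hs [hs3 hs4]]].
  destruct (nonpos_lower_bound (f5 l) (f6 l)) as [t [ht [ht5 ht6]]].
  exists (fun i j k => l i j k - shift s t i j k), (shift s t).
  split; [now apply sub_shift_in_Xset |].
  split; [now apply shift_in_Yset |].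
  intros; ring.
Qed.
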